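(* For all integers $s,t\ge 1$, the complete tripartite graph $K_{1,s,t}$ has property $M(3)$. Consequently, if $\max\{s,t\}\ge 2$, then $m(K_{1,s,t})=3$.
   Context: All graphs are finite, simple and undirected. A list assignment $L$ for a graph $G$ assigns to each vertex $v$ a set $L(v)$ of colors; an $L$-coloring is a proper vertex coloring $c$ of $G$ with $c(v)\in L(v)$ for every vertex $v$. A $k$-list assignment is a list assignment with $|L(v)|=k$ for all $v$. $G$ is uniquely $k$-list colorable (U$k$LC) if there exists a $k$-list assignment $L$ such that $G$ has exactly one $L$-coloring. $G$ has property $M(k)$ if it is not U$k$LC, i.e. for every $k$-list assignment $L$, $G$ has either no $L$-coloring or at least two $L$-colorings. The m-number $m(G)$ is the least integer $k\ge 1$ such that $G$ has property $M(k)$. $K_{n_1,\dots,n_r}$ denotes the complete $r$-partite graph with parts of sizes $n_1,\dots,n_r$. *)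

(* Simple graphs are symmetric irreflexive relations on a finType. *)
From mathcomp Require Import all_boot.
Set Implicit Arguments. Unset Strict Implicit. Unset Printing Implicit Defensive.

(* Colors are natural numbers (any finite set of colors can be relabeled into nat). *)

Definition L_coloring (T : finType) (e : rel T) (L : T -> seq nat) (c : T -> nat) : Prop :=
  (forall v, c v \in L v) /\ (forall u v, e u v -> c u <> c v).

Definition k_list_assignment (T : finType) (k : nat) (L : T -> seq nat) : Prop :=
  forall v, uniq (L v) /\ size (L v) = k.

Definition unique_L_coloring (T : finType) (e : rel T) (L : T -> seq nat) : Prop :=
  exists c, L_coloring e L c /\
    forall c', L_coloring e L c' -> forall v, c' v = c v.

Definition UkLC (T : finType) (e : rel T) (k : nat) : Prop :=
  exists L : T -> seq nat, k_list_assignment k L /\ unique_L_coloring e L.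

Definition has_M (T : finType) (e : rel T) (k : nat) : Prop := ~ UkLC e k.

Definition m_number_is (T : finType) (e : rel T) (k : nat) : Prop :=
  [/\ 1 <= k, has_M e k & forall j, 1 <= j < k -> ~ has_M e j].

Definition K1st_V (s t : nat) : finType := (unit + ('I_s + 'I_t))%type.

Definition K1st_part {s t : nat} (x : K1st_V s t) : nat :=
  match x with
  | inl _ => 0
  | inr (inl _) => 1
  | inr (inr _) => 2
  end.

Definition K1st (s t : nat) : rel (K1st_V s t) :=
  fun x y => K1st_part x != K1st_part y.
Arguments K1st s t : clear implicits.

(** A uniquely L-coloured graph has every colour of L(v) other than c(v) on a
    neighbour of v, since otherwise v could simply be recoloured.  In K_{1,s,t}
    with 3-lists this yields a second colouring.  Let a be the centre and u a
    neighbour carrying a colour of L(a) other than c(a), say u in part P, the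
    other side being Q.  Give a the colour c(u), each vertex of P a colour of
    its list avoiding c(v) and c(a), and each vertex of Q one avoiding c(v) and
    c(u).  Every new colour is an old colour c(w) of a neighbour w: w lies in Q
    for v in P, and in P or {a} for v in Q; hence the new colouring is proper.
    For 1-lists any graph is uniquely colourable, and for 2-lists K_{1,s,t} is,
    once one side has two vertices. *)
From mathcomp Require Import all_boot.
From mathcomp Require Import zify.
Set Implicit Arguments. Unset Strict Implicit. Unset Printing Implicit Defensive.

Definition other (l : seq nat) (a b : nat) : nat :=
  head 0 [seq z <- l | z \notin [:: a; b]].

Lemma otherP (l : seq nat) (a b : nat) :
  uniq l -> 2 < size l -> [/\ other l a b \in l, other l a b != a & other l a b != b].
Proof.
move=> l_uniq l_big; rewrite /other.
case E: [seq z <- l | z \notin [:: a; b]] => [|z l'].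
  suff: size l <= size [:: a; b] by rewrite leqNgt l_big.
  apply: uniq_leq_size => // z z_l.
  have : z \notin [seq z <- l | z \notin [:: a; b]] by rewrite E.
  by rewrite mem_filter z_l andbT negbK.
have : z \in [seq z <- l | z \notin [:: a; b]] by rewrite E mem_head.
by rewrite mem_filter !inE negb_or => /andP[/andP[-> ->] ->].
Qed.

Lemma other_3listP (T : finType) (L : T -> seq nat) :
  k_list_assignment 3 L -> forall v a b,
  [/\ other (L v) a b \in L v, other (L v) a b != a & other (L v) a b != b].
Proof. by move=> L_3 v a b; have [L_uniq L_size] := L_3 v; apply: otherP; rewrite ?L_size. Qed.

Section UniqueColoring.

Variables (T : finType) (e : rel T) (L : T -> seq nat) (c : T -> nat).
Hypotheses (e_sym : symmetric e) (c_col : L_coloring e L c)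
  (c_uniq : forall c', L_coloring e L c' -> forall v, c' v = c v).

Lemma unique_coloring_nbr_color v z :
  z \in L v -> z != c v -> exists2 w, e v w & c w = z.
Proof.
move=> z_L z_cv; case: (boolP [exists w, e v w && (c w == z)]).
  by case/existsP=> w /andP[vw /eqP cw]; exists w.
move/existsPn=> no_nbr; pose c' y := if y == v then z else c y.
suff /c_uniq/(_ v) : L_coloring e L c' by rewrite /c' eqxx => zE; rewrite zE eqxx in z_cv.
split=> [y|y1 y2 y12]; first by rewrite /c'; case: eqP => [->|_]; [|exact: c_col.1].
rewrite /c'; case: eqP => [y1v|_]; case: eqP => [y2v|_]; subst.
- by case: (c_col.2 _ _ y12).
- by move=> zE; have := no_nbr y2; rewrite y12 zE eqxx.
- by move=> zE; have := no_nbr y1; rewrite e_sym y12 zE eqxx.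
- exact: c_col.2.
Qed.

End UniqueColoring.

Lemma UkLC_1 (T : finType) (e : rel T) : irreflexive e -> UkLC e 1.
Proof.
move=> e_irr; pose col (v : T) := nat_of_ord (enum_rank v).
have col_proper u v : e u v -> col u <> col v.
  by move=> uv /val_inj/enum_rank_inj uvE; rewrite uvE e_irr in uv.
exists (fun v => [:: col v]); split=> //; exists col; split.
  by split=> // v; rewrite mem_head.
by move=> c' [c'_L _] v; apply/eqP; rewrite -mem_seq1 c'_L.
Qed.

Notation part := K1st_part.

Lemma part_le2 s t (v : K1st_V s t) : part v <= 2.
Proof. by case: v => [[]|[]]. Qed.

Lemma part_eq0 s t (v : K1st_V s t) : part v = 0 -> v = inl tt.
Proof. by case: v => [[]|[]]. Qed.

Lemma K1st_sym s t : symmetric (K1st s t).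
Proof. by move=> x y; rewrite /K1st eq_sym. Qed.

Lemma K1st_irr s t : irreflexive (K1st s t).
Proof. by move=> x; rewrite /K1st eqxx. Qed.

Section Recoloring.

Variables (s t : nat) (L : K1st_V s t -> seq nat) (c : K1st_V s t -> nat).
Hypotheses (L_3 : k_list_assignment 3 L) (c_col : L_coloring (K1st s t) L c)
  (c_uniq : forall c', L_coloring (K1st s t) L c' -> forall v, c' v = c v).

Let a : K1st_V s t := inl tt.

Variable u : K1st_V s t.
Hypotheses (u_nbr : K1st s t a u) (cu_La : c u \in L a).

Let p := part u.

Definition recolor v :=
  if part v == 0 then c u
  else if part v == p then other (L v) (c v) (c a)
  else other (L v) (c v) (c u).

Lemma c_part_neq w1 w2 : part w1 != part w2 -> c w1 <> c w2.
Proof. exact: c_col.2. Qed.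

Lemma recolor_in v : recolor v \in L v.
Proof.
rewrite /recolor; case: eqP => [/part_eq0 ->//|_].
by case: eqP => _; case: (other_3listP L_3 v (c v) (c a)); case: (other_3listP L_3 v (c v) (c u)).
Qed.

Lemma recolor_nbr v z :
  z \in L v -> z != c v -> exists2 w, part w != part v & c w = z.
Proof.
move=> z_L z_cv; have [w vw cw] := unique_coloring_nbr_color (@K1st_sym s t) c_col c_uniq z_L z_cv.
by exists w; rewrite // eq_sym.
Qed.

Lemma recolor_part_u v : part v = p ->
  exists2 w, recolor v = c w & (part w != 0) && (part w != p).
Proof.
move=> vP; have p0 : part v != 0 by rewrite vP eq_sym.
have [o_L o_cv o_ca] := other_3listP L_3 v (c v) (c a).
have [w wv cw] := recolor_nbr o_L o_cv.
exists w; first by rewrite /recolor (negbTE p0) vP eqxx cw.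
rewrite -vP wv andbT; apply: contraNN o_ca => /eqP/part_eq0 wa.
by rewrite -cw wa.
Qed.

Lemma recolor_other_part v : part v != 0 -> part v != p ->
  recolor v != c u /\ exists2 w, recolor v = c w & part w != part v.
Proof.
move=> v0 vP; rewrite /recolor (negbTE v0) (negbTE vP).
have [o_L o_cv o_cu] := other_3listP L_3 v (c v) (c u).
by split=> //; have [w wv cw] := recolor_nbr o_L o_cv; exists w.
Qed.

Lemma recolor_proper y1 y2 : part y1 != part y2 -> recolor y1 <> recolor y2.
Proof.
wlog y12 : y1 y2 / part y1 < part y2.
  move=> gen y12; have [lt12|lt21|yE] := ltngtP (part y1) (part y2).
  - exact: gen.
  - by move/esym; apply: gen; rewrite // eq_sym.
  - by rewrite yE eqxx in y12.
move=> _; have b1 := part_le2 y1; have b2 := part_le2 y2.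
have p0 : p != 0 by rewrite /p eq_sym.
have bp : p <= 2 := part_le2 u.
have y20 : part y2 != 0 by rewrite -lt0n (leq_ltn_trans _ y12).
case: (eqVneq (part y1) 0) => [y10|y10].
  have -> : recolor y1 = c u by rewrite /recolor y10.
  case: (eqVneq (part y2) p) => [y2P|y2P].
    have [w -> /andP[w0 wP]] := recolor_part_u y2P; apply: c_part_neq; by rewrite eq_sym.
  by have [/eqP cu_new _] := recolor_other_part y20 y2P; apply: nesym.
case: (eqVneq (part y1) p) => [y1P|y1P].
  have [w1 -> /andP[w10 w1P]] := recolor_part_u y1P.
  have y2P : part y2 != p by apply/eqP; lia.
  have [_ [w2 -> w2y]] := recolor_other_part y20 y2P.
  apply: c_part_neq; have := part_le2 w1; have := part_le2 w2; lia.
have y2P : part y2 = p by lia.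
have [w2 -> /andP[w20 w2P]] := recolor_part_u y2P.
have [_ [w1 -> w1y]] := recolor_other_part y10 y1P.
apply: c_part_neq; have := part_le2 w1; have := part_le2 w2; lia.
Qed.

Lemma recolor_coloring : L_coloring (K1st s t) L recolor.
Proof. by split; [exact: recolor_in | move=> y1 y2; exact: recolor_proper]. Qed.

Lemma recolor_center_changed : recolor a != c a.
Proof. by rewrite /recolor /=; apply/eqP/c_part_neq; rewrite eq_sym. Qed.

End Recoloring.

Lemma K1st_has_M3 s t : has_M (K1st s t) 3.
Proof.
move=> [L [L_3 [c [c_col c_uniq]]]]; pose a : K1st_V s t := inl tt.
have [x_L x_ca _] := other_3listP L_3 a (c a) (c a).
have [u au cu] := unique_coloring_nbr_color (@K1st_sym s t) c_col c_uniq x_L x_ca.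
have cu_La : c u \in L a by rewrite cu.
have := recolor_center_changed c_col au.
by rewrite (c_uniq _ (recolor_coloring L_3 c_col c_uniq au cu_La)) eqxx.
Qed.

Section TwoLists.

Variables (s t big : nat) (b d0 d1 : K1st_V s t).
Hypotheses (d0_big : part d0 = big) (d1_big : part d1 = big) (d10 : d1 != d0)
  (b0 : part b != 0) (b_big : part b != big).

Definition two_lists (v : K1st_V s t) : seq nat :=
  if part v == 0 then [:: 1; 2]
  else if part v == big then (if v == d0 then [:: 1; 2] else [:: 2; 3])
  else [:: 1; 3].

Definition two_lists_coloring (v : K1st_V s t) : nat :=
  if part v == 0 then 1 else if part v == big then 2 else 3.

Lemma big_neq0 : big != 0.
Proof.
apply: contraNneq d10 => big0.
by move: d0_big d1_big; rewrite big0 => /part_eq0 -> /part_eq0 ->.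
Qed.

Lemma two_lists_assignment : k_list_assignment 2 two_lists.
Proof. by move=> v; rewrite /two_lists; case: ifP => //; case: ifP => //; case: ifP. Qed.

Lemma two_lists_coloringP : L_coloring (K1st s t) two_lists two_lists_coloring.
Proof.
split=> [v|v w]; rewrite /two_lists /two_lists_coloring.
  by case: ifP => //; case: ifP => //; case: ifP.
have := part_le2 v; have := part_le2 w; have := part_le2 d0; have := big_neq0.
rewrite /K1st d0_big; move: (part v) (part w) => pv pw.
by case: (eqVneq pv 0); case: (eqVneq pv big); case: (eqVneq pw 0); case: (eqVneq pw big); lia.
Qed.

Section Forced.

Variable col : K1st_V s t -> nat.
Hypothesis col_ok : L_coloring (K1st s t) two_lists col.

Let a : K1st_V s t := inl tt.

Lemma two_lists_part_neq x y : part x != part y -> col x <> col y.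
Proof. exact: col_ok.2. Qed.

(* With the centre coloured 2, d0 and d1 would take 1 and 3, leaving nothing for b. *)
Lemma two_lists_forced : col a = 1 /\ col b = 3.
Proof.
have big0 := big_neq0; have nbr := two_lists_part_neq.
have ad0 : col a <> col d0 by apply: nbr; rewrite d0_big eq_sym.
have ad1 : col a <> col d1 by apply: nbr; rewrite d1_big eq_sym.
have ab : col a <> col b by apply: nbr; rewrite eq_sym.
have bd0 : col b <> col d0 by apply: nbr; rewrite d0_big.
have bd1 : col b <> col d1 by apply: nbr; rewrite d1_big.
have ca : col a \in [:: 1; 2] := col_ok.1 a.
have cd0 : col d0 \in [:: 1; 2].
  by have := col_ok.1 d0; rewrite /two_lists d0_big (negbTE big0) !eqxx.
have cd1 : col d1 \in [:: 2; 3].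
  by have := col_ok.1 d1; rewrite /two_lists d1_big (negbTE big0) eqxx (negbTE d10).
have cb : col b \in [:: 1; 3].
  by have := col_ok.1 b; rewrite /two_lists (negbTE b0) (negbTE b_big).
rewrite !inE in ca cd0 cd1 cb; lia.
Qed.

Lemma two_lists_unique v : col v = two_lists_coloring v.
Proof.
have [ca1 cb3] := two_lists_forced.
have := col_ok.1 v; have := @two_lists_part_neq a v; have := @two_lists_part_neq b v.
rewrite /two_lists /two_lists_coloring ca1 cb3 /=.
case: (eqVneq (part v) 0) => [/part_eq0 -> //|v0].
case: (eqVneq (part v) big) => [v_big|_] vb /(_ isT) va.
  have cv3 : 3 <> col v by apply: vb; rewrite v_big.
  by case: ifP; rewrite !inE; lia.
by rewrite !inE; lia.
Qed.

End Forced.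

Lemma two_lists_UkLC : UkLC (K1st s t) 2.
Proof.
exists two_lists; split; first exact: two_lists_assignment.
exists two_lists_coloring; split; first exact: two_lists_coloringP.
by move=> col col_ok v; apply: two_lists_unique.
Qed.

End TwoLists.

Lemma K1st_U2LC s t : 1 <= s -> 1 <= t -> 2 <= maxn s t -> UkLC (K1st s t) 2.
Proof.
move=> s1 t1; rewrite leq_max => /orP[s2|t2].
- by apply: (@two_lists_UkLC _ _ 1 (inr (inr (Ordinal t1))) (inr (inl (Ordinal s1)))
    (inr (inl (Ordinal s2)))).
- by apply: (@two_lists_UkLC _ _ 2 (inr (inl (Ordinal s1))) (inr (inr (Ordinal t1)))
    (inr (inr (Ordinal t2)))).
Qed.

Theorem proposition3p5 (s t : nat) :
  1 <= s -> 1 <= t ->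
  has_M (K1st s t) 3 /\ (2 <= maxn s t -> m_number_is (K1st s t) 3).
Proof.
move=> s1 t1; have M3 := @K1st_has_M3 s t.
split=> [//|st2]; split=> [//|//|j /andP[j1 j3]].
have [->|->] : j = 1 \/ j = 2 by lia.
- by apply; apply: UkLC_1; apply: K1st_irr.
- by apply; apply: K1st_U2LC.
Qed.
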